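(* Let $k$ be a field, $n\ge0$, and suppose $|k|\ge n+1$. Let $W=\operatorname{span}_k\{(\alpha_1x_1+\cdots+\alpha_mx_m)^n\mid \alpha_1,\ldots,\alpha_m\in k\}\subseteq k\langle x_1,\ldots,x_m\rangle$. Then $W=P_n(x_1,\ldots,x_m)$.
   Context: $k\langle x_1,\ldots,x_m\rangle$ is the free associative unital $k$-algebra. For nonnegative integers $i_1,\ldots,i_m$, $p_{i_1,\ldots,i_m}(x_1,\ldots,x_m)$ is the sum of all distinct noncommutative monomials with exactly $i_j$ occurrences of $x_j$ for each $j$ ($p_{0,\ldots,0}=1$), and $P_n(x_1,\ldots,x_m)=\operatorname{span}_k\{p_{i_1,\ldots,i_m}(x_1,\ldots,x_m)\mid i_1+\cdots+i_m=n\}$. *)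

From Stdlib Require List.
From HB Require Import structures.
From mathcomp Require Import all_boot all_order all_algebra.
Set Implicit Arguments. Unset Strict Implicit. Unset Printing Implicit Defensive.
Import GRing.Theory.
Local Open Scope ring_scope.

(* Words (noncommutative monomials) in the letters x_1..x_m, letter j : 'I_m. *)
Definition word (m : nat) := seq 'I_m.

(* Elements of k<x_1..x_m> are represented by their coefficient function
   on monomials (words).  Genuine elements have finite support; all the
   elements considered below do. *)
Definition ncpoly (k : fieldType) (m : nat) := word m -> k.

Section NC.
Variables (k : fieldType) (m : nat).

Definition nc_one : ncpoly k m := fun w => if w is [::] then 1 else 0.

Definition nc_mul (f g : ncpoly k m) : ncpoly k m :=
  fun w => \sum_(i < (size w).+1) f (take i w) * g (drop i w).

Definition nc_exp (f : ncpoly k m) (n : nat) : ncpoly k m :=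
  iter n (nc_mul f) nc_one.

Definition nc_lin (alpha : 'I_m -> k) : ncpoly k m :=
  fun w => if w is [:: j] then alpha j else 0.

Definition pmon (i : 'I_m -> nat) : ncpoly k m :=
  fun w => if [forall j, count_mem j w == i j] then 1 else 0.

Definition in_span (S : ncpoly k m -> Prop) (f : ncpoly k m) : Prop :=
  exists r : seq (ncpoly k m * k),
    (forall x, List.In x r -> S x.1) /\
    f = (fun w => \sum_(x <- r) x.2 * x.1 w).

Definition W_gen (n : nat) (g : ncpoly k m) : Prop :=
  exists alpha : 'I_m -> k, g = nc_exp (nc_lin alpha) n.

Definition P_gen (n : nat) (g : ncpoly k m) : Prop :=
  exists i : 'I_m -> nat, (\sum_(j < m) i j)%N = n /\ g = pmon i.

End NC.

From mathcomp Require Import all_boot all_order all_algebra.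
From Stdlib Require Import FunctionalExtensionality.
Set Implicit Arguments. Unset Strict Implicit. Unset Printing Implicit Defensive.
Import GRing.Theory.
Local Open Scope ring_scope.

(* The coefficient of (a_1 x_1 + ... + a_m x_m)^n on a word w of length n is
   the monomial a^c, where c_j counts the letters x_j of w; grouping words by
   their letter counts gives (a.x)^n = sum_i a^i p_i, so W is inside P_n.
   Conversely, fix n+1 distinct scalars s_0, ..., s_n and let D be the inverse
   of their Vandermonde matrix, so that sum_u D(u,e') s_u^e = [e = e'].  Summing
   prod_j D(t_j, i_j) (sum_j s_(t_j) x_j)^n over all maps t : {1..m} -> {0..n},
   the coefficient on a word with letter counts c factors as
   prod_j sum_u D(u, i_j) s_u^(c_j) = prod_j [c_j = i_j], which is that of p_i. *)

Section Span.
Variables (k : fieldType) (m : nat).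
Implicit Types (S T : ncpoly k m -> Prop) (f g : ncpoly k m).

Lemma in_span0 S : in_span S (fun _ => 0).
Proof.
by exists [::]; split => //; apply: functional_extensionality => w; rewrite big_nil.
Qed.

Lemma in_span_gen S g : S g -> in_span S g.
Proof.
move=> Sg; exists [:: (g, 1)]; split; first by move=> x /= [<-|[]].
by apply: functional_extensionality => w; rewrite big_seq1 mul1r.
Qed.

Lemma in_span_add S f g :
  in_span S f -> in_span S g -> in_span S (fun w => f w + g w).
Proof.
move=> [r1 [S1 ->]] [r2 [S2 ->]]; exists (r1 ++ r2); split.
  by move=> x /(List.in_app_or r1 r2 x) [/S1|/S2].
by apply: functional_extensionality => w; rewrite big_cat.
Qed.

Lemma in_span_scale S c f : in_span S f -> in_span S (fun w => c * f w).
Proof.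
move=> [r [Sr ->]]; exists (map (fun x => (x.1, c * x.2)) r); split.
  by move=> x /(List.in_map_iff _ r x) [y [<- /Sr]].
apply: functional_extensionality => w; rewrite big_map big_distrr /=.
by apply: eq_bigr => x _; rewrite mulrA.
Qed.

Lemma in_span_sum S (I : Type) (r : seq I) (P : pred I) (F : I -> ncpoly k m)
    (c : I -> k) :
  (forall i, P i -> in_span S (F i)) ->
  in_span S (fun w => \sum_(i <- r | P i) c i * F i w).
Proof.
move=> SF; elim: r => [|a r IHr].
  by under [fun w => _]functional_extensionality => w do rewrite big_nil;
     exact: in_span0.
under [fun w => _]functional_extensionality => w do rewrite big_cons.
case: (boolP (P a)) => Pa //.
by apply: in_span_add => //; apply/in_span_scale/SF.
Qed.

Lemma in_span_trans S T f :
  (forall g, S g -> in_span T g) -> in_span S f -> in_span T f.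
Proof.
move=> ST [r [Sr ->]]; elim: r Sr => [|x r IHr] Sr.
  by under [fun w => _]functional_extensionality => w do rewrite big_nil;
     exact: in_span0.
under [fun w => _]functional_extensionality => w do rewrite big_cons.
apply: in_span_add; last by apply: IHr => y ry; apply: Sr; right.
by apply/in_span_scale/ST/Sr; left.
Qed.

End Span.

Section Monomials.
Variables (k : fieldType) (m : nat).
Implicit Types (a : 'I_m -> k) (w : word m).

Lemma nc_mul_linE a (g : ncpoly k m) w :
  nc_mul (nc_lin a) g w = if w is c :: w' then a c * g w' else 0.
Proof.
rewrite /nc_mul; case: w => [|c w] /=; first by rewrite big_ord1 /= mul0r.
rewrite big_ord_recl /= mul0r add0r big_ord_recl /= take0 drop0.
case: w => [|d w] /=; first by rewrite big_ord0 addr0.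
by rewrite big1 ?addr0 // => i _; rewrite mul0r.
Qed.

Lemma nc_exp_linE a n w :
  nc_exp (nc_lin a) n w = if size w == n then \prod_(c <- w) a c else 0.
Proof.
elim: n w => [|n IHn] [|c w] /=; rewrite ?big_nil // nc_mul_linE //.
by rewrite IHn eqSS big_cons; case: ifP; rewrite ?mulr0.
Qed.

Lemma prodr_count_mem a w :
  \prod_(c <- w) a c = \prod_(j < m) a j ^+ count_mem j w.
Proof.
elim: w => [|c w IHw]; first by rewrite big_nil big1 // => j _; rewrite expr0.
rewrite big_cons IHw /=.
under [in RHS]eq_bigr => j _ do rewrite exprD.
rewrite big_split /=; congr (_ * _).
rewrite (bigD1 c) //= eqxx expr1 big1 ?mulr1 // => j /negPf.
by rewrite eq_sym => ->; rewrite expr0.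
Qed.

Lemma sum_count_mem w : (\sum_(j < m) count_mem j w)%N = size w.
Proof.
elim: w => [|c w IHw]; first by rewrite big1.
rewrite /= big_split /= IHw (bigD1 c) //= eqxx big1 // => j /negPf.
by rewrite eq_sym => ->.
Qed.

Lemma pmon_prodE (i : 'I_m -> nat) w :
  pmon k i w = \prod_(j < m) (count_mem j w == i j)%:R.
Proof.
rewrite /pmon; case: (boolP [forall j, _]) => [/forallP ci | /forallPn [j /negPf cj]].
  by rewrite big1 // => j _; rewrite ci.
by rewrite (bigD1 j) //= cj mul0r.
Qed.

Lemma pmon_size (i : 'I_m -> nat) w :
  (\sum_(j < m) i j)%N != size w -> pmon k i w = 0.
Proof.
rewrite /pmon -sum_count_mem; case: forallP => // ci /eqP[].
by apply: eq_bigr => j _; apply/esym/eqP.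
Qed.

(* The letter counts of w as an exponent vector with entries at most n; it is
   only meaningful when size w <= n, since inord wraps larger counts to 0. *)
Definition count_vec n w : {ffun 'I_m -> 'I_n.+1} :=
  [ffun j => inord (count_mem j w)].

Lemma count_vecE n w j : (size w <= n)%N -> val (count_vec n w j) = count_mem j w.
Proof.
by move=> wn; rewrite ffunE /= inordK // ltnS (leq_trans (count_size _ _) wn).
Qed.

Lemma pmon_ffunE n (t : {ffun 'I_m -> 'I_n.+1}) w : (size w <= n)%N ->
  pmon k (fun j => val (t j)) w = (t == count_vec n w)%:R.
Proof.
move=> wn; rewrite /pmon.
suff -> : [forall j, count_mem j w == val (t j)] = (t == count_vec n w) by case: (_ == _).
apply/forallP/eqP => [ct | -> j]; last by rewrite count_vecE.
by apply/ffunP => j; apply/val_inj; rewrite count_vecE //; apply/esym/eqP.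
Qed.

Lemma nc_exp_lin_pmon_expansion a n :
  nc_exp (nc_lin a) n =
  (fun w => \sum_(t : {ffun 'I_m -> 'I_n.+1} | (\sum_(j < m) val (t j) == n)%N)
             (\prod_(j < m) a j ^+ t j) * pmon k (fun j => val (t j)) w).
Proof.
apply: functional_extensionality => w; rewrite nc_exp_linE.
case: eqP => [wn | wn]; last first.
  rewrite big1 // => t /eqP tn.
  by rewrite pmon_size ?mulr0 // tn; apply/eqP => /esym/wn.
have sum_cw : (\sum_(j < m) val (count_vec n w j))%N == n.
  by rewrite (eq_bigr _ (fun j _ => count_vecE j (eq_leq wn))) sum_count_mem wn.
under [RHS]eq_bigr => t _ do rewrite pmon_ffunE ?wn //.
rewrite [RHS](bigD1 (count_vec n w)) //= eqxx mulr1 [X in _ + X]big1 ?addr0.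
  by rewrite prodr_count_mem; apply: eq_bigr => j _; rewrite count_vecE ?wn.
by move=> t /andP[_ /negPf->]; rewrite mulr0.
Qed.

Lemma pmon_interpolation n (s : seq k) (D : 'M[k]_n.+1) (i : 'I_m -> nat) :
    (forall e e' : 'I_n.+1, \sum_(u < n.+1) D u e' * s`_u ^+ e = (e == e')%:R) ->
    (\sum_(j < m) i j)%N = n ->
  pmon k i =
  (fun w => \sum_(t : {ffun 'I_m -> 'I_n.+1})
             (\prod_(j < m) D (t j) (inord (i j))) *
             nc_exp (nc_lin (fun j => s`_(t j))) n w).
Proof.
move=> dualD sum_i; apply: functional_extensionality => w.
under eq_bigr => t _ do rewrite nc_exp_linE.
case: eqP => [wn | /eqP wn]; last first.
  rewrite pmon_size ?sum_i 1?eq_sym //.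
  by rewrite big1 // => t _; rewrite mulr0.
have ile j : (i j < n.+1)%N by rewrite ltnS -sum_i (bigD1 j) //= leq_addr.
have cle j : (count_mem j w < n.+1)%N by rewrite ltnS -wn count_size.
under eq_bigr => t _ do rewrite prodr_count_mem -big_split /=.
rewrite -(bigA_distr_bigA (fun j u => D u (inord (i j)) * s`_u ^+ count_mem j w)).
rewrite pmon_prodE; apply: eq_bigr => j _.
have := dualD (inord (count_mem j w)) (inord (i j)).
by rewrite -val_eqE /= !inordK // inordK.
Qed.

End Monomials.

Lemma vandermonde_dual_basis (k : fieldType) n (s : seq k) :
    uniq s -> size s = n.+1 ->
  exists D : 'M[k]_n.+1,
    forall e e' : 'I_n.+1, \sum_(u < n.+1) D u e' * s`_u ^+ e = (e == e')%:R.
Proof.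
move=> us sz; pose V := Vandermonde n.+1 (\row_(u < n.+1) s`_u).
have V_unit : V \in unitmx.
  rewrite unitmxE unitfE det_Vandermonde; apply/prodf_neq0 => u _.
  apply/prodf_neq0 => v uv; rewrite !mxE subr_eq0 nth_uniq ?sz //.
  by apply: contraTneq uv => /val_inj->; rewrite ltnn.
exists (invmx V) => e e'.
have := congr1 (fun M : 'M_n.+1 => M e e') (mulmxV V_unit).
rewrite !mxE => <-; apply: eq_bigr => u _.
by rewrite !mxE mulrC.
Qed.

Theorem proposition2p4 (k : fieldType) (m n : nat) :
  (exists s : seq k, uniq s /\ size s = n.+1) ->
  forall f : ncpoly k m,
    in_span (@W_gen k m n) f <-> in_span (@P_gen k m n) f.
Proof.
move=> [s [us sz]] f; split; apply: in_span_trans => g.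
  move=> [a ->]; rewrite nc_exp_lin_pmon_expansion.
  apply: in_span_sum => t /eqP sum_t; apply: in_span_gen.
  by exists (fun j => val (t j)).
have [D dualD] := vandermonde_dual_basis us sz.
move=> [i [sum_i ->]]; rewrite (pmon_interpolation dualD sum_i).
by apply: in_span_sum => t _; apply: in_span_gen; exists (fun j => s`_(t j)).
Qed.
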